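(* Let $(A,\circ)$ be a right normal band. If every two elements $s,t\in A$ have a greatest lower bound $s\wedge t$ with respect to the natural order $\le$, then $(A,\circ,\wedge)$ is a right normal band with intersection. Conversely, if $(A,\circ,\cap)$ is a right normal band with intersection, then $s\cap t$ is the greatest lower bound of $s,t$ with respect to $\le$. Consequently, an algebra $(A,\circ,\cap)$ is a right normal band with intersection if and only if $(A,\circ)$ is a right normal band and for all $x,y,z\in A$: $x=x\circ y$ and $x=x\circ z$ hold if and only if $x=x\circ(y\cap z)$.
   Context: A right normal band is a semigroup $(A,\circ)$ with $x\circ x=x$ and $(x\circ y)\circ z=(y\circ x)\circ z$. Its natural order is $x\le y$ iff $x=x\circ y$. A right normal band with intersection $(A,\circ,\cap)$: $(A,\circ)$ a right normal band, $(A,\cap)$ a semilattice (associative, commutative, idempotent), $(x\cap y)\circ x=x\cap y$ and $x\circ(y\cap z)=(x\circ y)\cap z$ for all $x,y,z$. *)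

Definition right_normal_band {A : Type} (op : A -> A -> A) : Prop :=
  (forall x y z, op x (op y z) = op (op x y) z) /\
  (forall x, op x x = x) /\
  (forall x y z, op (op x y) z = op (op y x) z).

Definition nat_le {A : Type} (op : A -> A -> A) (x y : A) : Prop := x = op x y.

Definition is_glb {A : Type} (op : A -> A -> A) (g s t : A) : Prop :=
  nat_le op g s /\ nat_le op g t /\
  (forall l, nat_le op l s -> nat_le op l t -> nat_le op l g).

Definition semilattice {A : Type} (cap : A -> A -> A) : Prop :=
  (forall x y z, cap x (cap y z) = cap (cap x y) z) /\
  (forall x y, cap x y = cap y x) /\
  (forall x, cap x x = x).

Definition rnb_with_intersection {A : Type} (op cap : A -> A -> A) : Prop :=
  right_normal_band op /\ semilattice cap /\
  (forall x y, op (cap x y) x = cap x y) /\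
  (forall x y z, op x (cap y z) = cap (op x y) z).

(* In a right normal band the natural order is a partial order in which an
   element is determined by its down-set, and [l <= x o y] holds exactly when
   [x o l = l] and [l <= y].  So [meet] is a glb iff
   [l <= meet s t <-> l <= s /\ l <= t] for all [l]; under this description
   both sides of every axiom of a right normal band with intersection have the
   same down-set, by a propositional tautology.  Conversely, the axiom
   [x o (y cap z) = (x o y) cap z] with [y = z] turns [x <= y] and [x <= z]
   into [x <= y cap z]. *)

From Stdlib Require Import Setoid.

Section NaturalOrder.

Context {A : Type} {op : A -> A -> A}.
Hypothesis band : right_normal_band op.

Let opA : forall x y z, op x (op y z) = op (op x y) z := proj1 band.
Let opxx : forall x, op x x = x := proj1 (proj2 band).
Let op_rnormal : forall x y z, op (op x y) z = op (op y x) z := proj2 (proj2 band).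

Lemma nat_le_refl x : nat_le op x x.
Proof. unfold nat_le; now rewrite opxx. Qed.

Lemma nat_le_trans x y z : nat_le op x y -> nat_le op y z -> nat_le op x z.
Proof.
  unfold nat_le; intros Hxy Hyz.
  rewrite Hxy at 2; rewrite <- opA, <- Hyz; exact Hxy.
Qed.

Lemma nat_le_antisym x y : nat_le op x y -> nat_le op y x -> x = y.
Proof.
  unfold nat_le; intros Hxy Hyx.
  transitivity (op x (op y x)); [rewrite <- Hyx; exact Hxy |].
  rewrite opA, op_rnormal, <- opA, opxx; symmetry; exact Hyx.
Qed.

Lemma nat_le_ext x y : (forall l, nat_le op l x <-> nat_le op l y) -> x = y.
Proof.
  intros Hxy; apply nat_le_antisym.
  - apply Hxy, nat_le_refl.
  - apply Hxy, nat_le_refl.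
Qed.

Lemma nat_le_op_r x y : nat_le op (op x y) y.
Proof. unfold nat_le; now rewrite <- opA, opxx. Qed.

Lemma nat_le_opE l x y : nat_le op l (op x y) <-> op x l = l /\ nat_le op l y.
Proof.
  unfold nat_le; split.
  - intros Hl; split.
    + rewrite Hl at 1.
      rewrite opA, opA, (op_rnormal x l x), <- (opA l x x), opxx, <- opA.
      symmetry; exact Hl.
    + apply (nat_le_trans _ _ _ Hl), nat_le_op_r.
  - intros [Hxl Hly].
    rewrite opA, op_rnormal, Hxl; exact Hly.
Qed.

Lemma is_glbP g s t :
  is_glb op g s t <->
  (forall l, nat_le op l g <-> nat_le op l s /\ nat_le op l t).
Proof.
  split.
  - intros [Hgs [Hgt Hg]] l; split.
    + intros Hlg; split; eapply nat_le_trans; eassumption.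
    + intros [Hls Hlt]; apply Hg; assumption.
  - intros Hg.
    destruct (proj1 (Hg g) (nat_le_refl g)) as [Hgs Hgt].
    split; [exact Hgs | split; [exact Hgt |]].
    intros l Hls Hlt; apply Hg; split; assumption.
Qed.

End NaturalOrder.

Section MeetOfNaturalOrder.

Variables (A : Type) (op meet : A -> A -> A).
Hypothesis band : right_normal_band op.
Hypothesis meet_glb : forall s t, is_glb op (meet s t) s t.

Let nat_le_meet l s t :
  nat_le op l (meet s t) <-> nat_le op l s /\ nat_le op l t :=
  proj1 (is_glbP band _ _ _) (meet_glb s t) l.

Lemma semilattice_meet : semilattice meet.
Proof.
  split; [| split]; intros; apply (nat_le_ext band); intros l;
    rewrite ?nat_le_meet; tauto.
Qed.

Lemma meet_absorb x y : op (meet x y) x = meet x y.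
Proof. symmetry; apply (nat_le_meet (meet x y) x y), nat_le_refl, band. Qed.

Lemma op_meet_distr x y z : op x (meet y z) = meet (op x y) z.
Proof.
  apply (nat_le_ext band); intros l.
  rewrite nat_le_meet, !(nat_le_opE band), nat_le_meet; tauto.
Qed.

Lemma rnb_with_intersection_meet : rnb_with_intersection op meet.
Proof.
  split; [exact band | split; [exact semilattice_meet |]].
  split; [exact meet_absorb | exact op_meet_distr].
Qed.

End MeetOfNaturalOrder.

Lemma is_glb_cap {A : Type} {op cap : A -> A -> A} :
  rnb_with_intersection op cap -> forall s t, is_glb op (cap s t) s t.
Proof.
  intros [_ [[_ [capC capxx]] [cap_absorb op_cap_distr]]] s t.
  unfold is_glb, nat_le.
  split; [| split].
  - symmetry; apply cap_absorb.
  - rewrite capC; symmetry; apply cap_absorb.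
  - intros l Hls Hlt.
    assert (Hlt' : l = cap l t).
    { rewrite Hlt at 2; rewrite <- op_cap_distr, capxx; exact Hlt. }
    rewrite op_cap_distr, <- Hls; exact Hlt'.
Qed.

Theorem proposition5p1 :
  (forall (A : Type) (op meet : A -> A -> A),
      right_normal_band op ->
      (forall s t, is_glb op (meet s t) s t) ->
      rnb_with_intersection op meet) /\
  (forall (A : Type) (op cap : A -> A -> A),
      rnb_with_intersection op cap ->
      forall s t, is_glb op (cap s t) s t) /\
  (forall (A : Type) (op cap : A -> A -> A),
      rnb_with_intersection op cap <->
      (right_normal_band op /\
       forall x y z, (x = op x y /\ x = op x z) <-> x = op x (cap y z))).
Proof.
  split; [exact rnb_with_intersection_meet |].
  split; [exact @is_glb_cap |].
  intros A op cap; split.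
  - intros Hcap; split; [exact (proj1 Hcap) |].
    intros x y z; symmetry.
    exact (proj1 (is_glbP (proj1 Hcap) _ _ _) (is_glb_cap Hcap y z) x).
  - intros [band Hcap]; apply rnb_with_intersection_meet; [exact band |].
    intros s t; apply (is_glbP band); intros l; symmetry; exact (Hcap l s t).
Qed.
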